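(* Fix $\gamma \in (\tfrac{2}{3},2)$ and let $x \in B_1^+(\mathrm{VI}_0)$. Suppose the Taub point $T_1$ belongs to the $\alpha$-limit set $\alpha(x)$. Then there exists a point $y \in \alpha(x)$ with $y \neq T_1$ and $\Omega(y) = 0$.
   Context: Set $q^* := \tfrac{3\gamma-2}{2} \in (0,2)$. On $\mathbb{R}^5$ with coordinates $(\Sigma_+,\Sigma_-,N_+,N_-,\Omega)$ consider the system (with $' = d/d\tau$) $\Sigma_+' = -(2-q)\Sigma_+ - 2N_-^2$, $\Sigma_-' = -(2-q)\Sigma_- - 2\sqrt{3}N_+N_-$, $N_+' = (q+2\Sigma_+)N_+ + 2\sqrt{3}\Sigma_- N_-$, $N_-' = (q+2\Sigma_+)N_- + 2\sqrt{3}\Sigma_- N_+$, $\Omega' = 2(q-q^* )\Omega$, where $q := 2(\Sigma_+^2+\Sigma_-^2) + q^*\Omega$. The phase space $B_1^+(\mathrm{VI}_0)$ is the set of points satisfying the constraint $\Omega + \Sigma_+^2 + \Sigma_-^2 + N_-^2 = 1$ together with $\Omega \ge 0$ and $N_- > |N_+|$; it is invariant under the flow, solutions exist for all $\tau\in\mathbb{R}$, and $\varphi^\tau(x)$ denotes the solution with $\varphi^0(x)=x$. The $\alpha$-limit set $\alpha(x)$ is the set of all limits of sequences $\varphi^{\tau_k}(x)$ with $\tau_k \to -\infty$ (these lie in the closure of $B_1^+(\mathrm{VI}_0)$ in $\mathbb{R}^5$). The Taub point $T_1$ is the point with $(\Sigma_+,\Sigma_-,N_+,N_-,\Omega) = (-1,0,0,0,0)$.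 *)

From Stdlib Require Import Reals.
From Coquelicot Require Import Coquelicot.
Open Scope R_scope.

Record pt : Type := mkpt { Sp : R; Sm : R; Np : R; Nm : R; Om : R }.

Definition qstar (g : R) : R := (3 * g - 2) / 2.

Definition qf (g : R) (p : pt) : R :=
  2 * (Sp p ^ 2 + Sm p ^ 2) + qstar g * Om p.

Definition vf (g : R) (p : pt) : pt :=
  mkpt (- (2 - qf g p) * Sp p - 2 * Nm p ^ 2)
       (- (2 - qf g p) * Sm p - 2 * sqrt 3 * Np p * Nm p)
       ((qf g p + 2 * Sp p) * Np p + 2 * sqrt 3 * Sm p * Nm p)
       ((qf g p + 2 * Sp p) * Nm p + 2 * sqrt 3 * Sm p * Np p)
       (2 * (qf g p - qstar g) * Om p).

Definition is_solution (g : R) (phi : R -> pt) : Prop :=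
  forall t : R,
    is_derive (fun s => Sp (phi s)) t (Sp (vf g (phi t))) /\
    is_derive (fun s => Sm (phi s)) t (Sm (vf g (phi t))) /\
    is_derive (fun s => Np (phi s)) t (Np (vf g (phi t))) /\
    is_derive (fun s => Nm (phi s)) t (Nm (vf g (phi t))) /\
    is_derive (fun s => Om (phi s)) t (Om (vf g (phi t))).

Definition in_B1plus (p : pt) : Prop :=
  Om p + Sp p ^ 2 + Sm p ^ 2 + Nm p ^ 2 = 1 /\ 0 <= Om p /\ Nm p > Rabs (Np p).

Definition in_alpha_limit (phi : R -> pt) (y : pt) : Prop :=
  exists tk : nat -> R,
    is_lim_seq tk m_infty /\
    is_lim_seq (fun k => Sp (phi (tk k))) (Sp y) /\
    is_lim_seq (fun k => Sm (phi (tk k))) (Sm y) /\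
    is_lim_seq (fun k => Np (phi (tk k))) (Np y) /\
    is_lim_seq (fun k => Nm (phi (tk k))) (Nm y) /\
    is_lim_seq (fun k => Om (phi (tk k))) (Om y).

Definition T1 : pt := mkpt (-1) 0 0 0 0.

From Stdlib Require Import Reals Lra Lia Psatz Classical IndefiniteDescription.
From Coquelicot Require Import Coquelicot.
Open Scope R_scope.

(* Near T_1, i.e. where 1 + Sigma_+ is small, q exceeds qstar by a fixed margin, so
   forward in time Omega increases and (Sigma_-^2 + N_-^2) e^(-kappa Omega) decreases.
   An orbit staying near T_1 on a whole half-line (-oo, T] would therefore keep
   Sigma_-^2 + N_-^2 above a positive constant there, contradicting T_1 in alpha(x).
   So before each time tau_k of a sequence approaching T_1 there is a last time
   s_k <= tau_k with 1 + Sigma_+(s_k) = eta, and Omega(s_k) <= Omega(tau_k) -> 0.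
   Any limit point of the phi(s_k) is the required y. *)

Lemma continuity_pt_of_is_derive (f : R -> R) (x l : R) :
  is_derive f x l -> continuity_pt f x.
Proof.
  intro Hf. apply continuity_pt_filterlim.
  exact (ex_derive_continuous f x (ex_intro _ l Hf)).
Qed.

Lemma nondecreasing_of_is_derive_nonneg (f df : R -> R) (a b : R) :
  a <= b -> (forall x, a <= x <= b -> is_derive f x (df x) /\ 0 <= df x) ->
  f a <= f b.
Proof.
  intros Hab Hf.
  destruct (MVT_gen f a b df) as [c [Hc Hmvt]];
    rewrite ?Rmin_left, ?Rmax_right in * by lra.
  - intros x Hx. apply Hf. lra.
  - intros x Hx. apply (continuity_pt_of_is_derive _ _ (df x)), Hf, Hx.
  - destruct (Hf c Hc) as [_ Hdf]. nra.
Qed.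

Lemma linear_ode_exp (f a : R -> R) :
  (forall t, continuous a t) -> (forall t, is_derive f t (a t * f t)) ->
  forall t, f t = f 0 * exp (RInt a 0 t).
Proof.
  intros Ha Hf.
  set (h := fun s => f s * exp (- RInt a 0 s)).
  assert (Hh : forall t, is_derive h t 0).
  { intro t. unfold h. auto_derive.
    - repeat split.
      + eexists; apply Hf.
      + apply (ex_RInt_continuous (V := R_CompleteNormedModule)). intros z _. apply Ha.
      + apply filter_forall. intro z. apply continuity_pt_filterlim, Ha.
    - rewrite (is_derive_unique (fun x : R => f x) t _ (Hf t)). ring. }
  intro t.
  assert (Hconst : h t = h 0).
  { destruct (MVT_gen h 0 t (fun _ => 0)) as [c [_ Hc]].
    - intros x _. apply Hh.
    - intros x _. apply (continuity_pt_of_is_derive _ _ 0), Hh.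
    - lra. }
  unfold h in Hconst. rewrite RInt_point in Hconst.
  change (f t * exp (- RInt a 0 t) = f 0 * exp (- 0)) in Hconst.
  rewrite Ropp_0, exp_0, Rmult_1_r in Hconst.
  rewrite <- Hconst, Rmult_assoc, <- exp_plus, Rplus_opp_l, exp_0. ring.
Qed.

Lemma continuous_lt_locally (f : R -> R) (x c : R) :
  continuous f x -> f x < c -> exists eps : posreal, forall y, Rabs (y - x) < eps -> f y < c.
Proof. intros Hf Hx. exact (Hf _ (open_lt c (f x) Hx)). Qed.

Lemma continuous_gt_locally (f : R -> R) (x c : R) :
  continuous f x -> c < f x -> exists eps : posreal, forall y, Rabs (y - x) < eps -> c < f y.
Proof. intros Hf Hx. exact (Hf _ (open_gt c (f x) Hx)). Qed.

Lemma last_crossing (f : R -> R) (c t0 T : R) :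
  (forall x, continuous f x) -> t0 <= T -> c <= f t0 -> f T <= c ->
  exists s, t0 <= s <= T /\ f s = c /\ (forall x, s <= x <= T -> f x <= c).
Proof.
  intros Hf Ht0T Ht0 HT.
  set (E := fun x => t0 <= x <= T /\ c <= f x).
  destruct (completeness E) as [s [Hub Hlub]].
  { exists T. intros x Hx. apply Hx. }
  { exists t0. split; [lra | exact Ht0]. }
  assert (Hs : t0 <= s <= T).
  { split; [apply Hub; split; [lra | exact Ht0]|].
    apply Hlub. intros x Hx. apply Hx. }
  assert (Hright : forall x, s < x <= T -> f x < c).
  { intros x Hx. apply Rnot_le_lt. intro Hc.
    assert (x <= s) by (apply Hub; split; lra). lra. }
  assert (Hge : c <= f s).
  { apply Rnot_lt_le. intro Hlt.
    destruct (continuous_lt_locally f s c (Hf s) Hlt) as [eps Heps].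
    enough (s <= s - eps) by (pose proof (cond_pos eps); lra).
    apply Hlub. intros x [Hx Hcx]. apply Rnot_lt_le. intro Hlt'.
    assert (x <= s) by (apply Hub; split; assumption).
    assert (f x < c) by (apply Heps, Rabs_def1; lra). lra. }
  assert (Hle : f s <= c).
  { destruct (Req_dec s T) as [-> | HsT]; [exact HT|].
    apply Rnot_lt_le. intro Hgt.
    destruct (continuous_gt_locally f s c (Hf s) Hgt) as [eps Heps].
    pose proof (cond_pos eps).
    set (x := Rmin (s + eps / 2) T).
    assert (s < x <= T) by (unfold x; split; [apply Rmin_glb_lt | apply Rmin_r]; lra).
    assert (x <= s + eps / 2) by apply Rmin_l.
    assert (c < f x) by (apply Heps, Rabs_def1; lra).
    assert (f x < c) by (apply Hright; lra). lra. }
  exists s. split; [exact Hs | split; [lra|]].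
  intros x Hx. destruct (Req_dec x s) as [-> | Hxs]; [exact Hle|].
  left. apply Hright. lra.
Qed.

(* Subsequences are index maps tending to infinity. *)
Lemma bolzano_weierstrass_subseq (a b : R) (u : nat -> R) :
  (forall n, a <= u n <= b) ->
  exists (psi : nat -> nat) (l : R),
    filterlim psi eventually eventually /\ is_lim_seq (fun n => u (psi n)) l.
Proof.
  intro Hu.
  destruct (Bolzano_Weierstrass u _ (compact_P3 a b) Hu) as [l Hl].
  assert (Hclose : forall n, exists p, (n <= p)%nat /\ Rabs (u p - l) < / INR (S n)).
  { intro n.
    assert (Hr : 0 < / INR (S n)) by (apply Rinv_0_lt_compat, lt_0_INR; lia).
    apply (Hl (disc l (mkposreal _ Hr))).
    exists (mkposreal _ Hr). intros y Hy. exact Hy. }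
  destruct (functional_choice _ Hclose) as [psi Hpsi].
  exists psi, l. split.
  - intros P [N HN]. exists N. intros n Hn. apply HN. specialize (Hpsi n). lia.
  - apply is_lim_seq_spec. intro eps.
    destruct (archimed_cor1 eps (cond_pos eps)) as [N [HN HN0]].
    exists N. intros n Hn. destruct (Hpsi n) as [_ Hn'].
    assert (/ INR (S n) <= / INR N).
    { apply Rinv_le_contravar; [apply lt_0_INR; exact HN0 | apply le_INR; lia]. }
    lra.
Qed.

Definition in_unit_cube (p : pt) : Prop :=
  -1 <= Sp p <= 1 /\ -1 <= Sm p <= 1 /\ -1 <= Np p <= 1 /\ -1 <= Nm p <= 1 /\ -1 <= Om p <= 1.

Definition pt_lim (u : nat -> pt) (y : pt) : Prop :=
  is_lim_seq (fun n => Sp (u n)) (Sp y) /\ is_lim_seq (fun n => Sm (u n)) (Sm y) /\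
  is_lim_seq (fun n => Np (u n)) (Np y) /\ is_lim_seq (fun n => Nm (u n)) (Nm y) /\
  is_lim_seq (fun n => Om (u n)) (Om y).

Lemma pt_bolzano_weierstrass (u : nat -> pt) :
  (forall n, in_unit_cube (u n)) ->
  exists (psi : nat -> nat) (y : pt),
    filterlim psi eventually eventually /\ pt_lim (fun n => u (psi n)) y.
Proof.
  intro Hu.
  destruct (bolzano_weierstrass_subseq (-1) 1 (fun n => Sp (u n)))
    as (p1 & l1 & P1 & L1); [intro n; apply Hu|].
  destruct (bolzano_weierstrass_subseq (-1) 1 (fun n => Sm (u (p1 n))))
    as (p2 & l2 & P2 & L2); [intro n; apply Hu|].
  destruct (bolzano_weierstrass_subseq (-1) 1 (fun n => Np (u (p1 (p2 n)))))
    as (p3 & l3 & P3 & L3); [intro n; apply Hu|].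
  destruct (bolzano_weierstrass_subseq (-1) 1 (fun n => Nm (u (p1 (p2 (p3 n))))))
    as (p4 & l4 & P4 & L4); [intro n; apply Hu|].
  destruct (bolzano_weierstrass_subseq (-1) 1 (fun n => Om (u (p1 (p2 (p3 (p4 n)))))))
    as (p5 & l5 & P5 & L5); [intro n; apply Hu|].
  pose proof (filterlim_comp _ _ _ p5 p4 _ _ _ P5 P4) as P45.
  pose proof (filterlim_comp _ _ _ _ p3 _ _ _ P45 P3) as P35.
  pose proof (filterlim_comp _ _ _ _ p2 _ _ _ P35 P2) as P25.
  exists (fun n => p1 (p2 (p3 (p4 (p5 n))))), (mkpt l1 l2 l3 l4 l5).
  split; [exact (filterlim_comp _ _ _ _ p1 _ _ _ P25 P1)|].
  split; [exact (is_lim_seq_subseq _ _ _ P25 L1)|].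
  split; [exact (is_lim_seq_subseq _ _ _ P35 L2)|].
  split; [exact (is_lim_seq_subseq _ _ _ P45 L3)|].
  split; [exact (is_lim_seq_subseq _ _ _ P5 L4) | exact L5].
Qed.

(* With the constraint, Omega + Sigma_-^2 + N_-^2 <= 2 (1 + Sigma_+); taub_eta is chosen so
   that this forces q - qstar >= (2 - qstar) / 2, and taub_kappa so that
   kappa (2 - qstar) = 4 absorbs the growth rate 4 Omega of Sigma_-^2 + N_-^2. *)
Definition taub_eta (g : R) : R := (2 - qstar g) / (4 * (2 - qstar g) + 8).
Definition taub_kappa (g : R) : R := 4 / (2 - qstar g).
Definition near_taub (g : R) (p : pt) : Prop := 1 + Sp p <= taub_eta g.

Lemma two_sub_qstar_pos (g : R) : g < 2 -> 0 < 2 - qstar g.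
Proof. unfold qstar. lra. Qed.

Lemma taub_eta_pos (g : R) : g < 2 -> 0 < taub_eta g.
Proof.
  intro Hg. pose proof (two_sub_qstar_pos g Hg).
  unfold taub_eta. apply Rdiv_lt_0_compat; lra.
Qed.

Section NearTaub.

Variables (g : R) (p : pt).
Hypotheses (Hg : g < 2) (Hcon : Om p + Sp p ^ 2 + Sm p ^ 2 + Nm p ^ 2 = 1)
  (Hom : 0 <= Om p) (Hnear : near_taub g p).

Lemma q_gap_near_taub : (2 - qstar g) / 2 <= qf g p - qstar g.
Proof.
  pose proof (two_sub_qstar_pos g Hg). pose proof (taub_eta_pos g Hg).
  assert (Heta : taub_eta g * (4 * (2 - qstar g) + 8) = 2 - qstar g)
    by (unfold taub_eta; field; lra).
  unfold near_taub in Hnear. unfold qf.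
  assert (-1 <= Sp p) by nra.
  assert (Om p + Sm p ^ 2 + Nm p ^ 2 <= 2 * (1 + Sp p)) by nra.
  nra.
Qed.

Lemma sm_nm_growth_near_taub :
  2 * Sm p * Sm (vf g p) + 2 * Nm p * Nm (vf g p)
  <= taub_kappa g * Om (vf g p) * (Sm p ^ 2 + Nm p ^ 2).
Proof.
  pose proof q_gap_near_taub as Hq. pose proof (two_sub_qstar_pos g Hg).
  pose proof (taub_eta_pos g Hg).
  assert (Hkappa : taub_kappa g * (2 - qstar g) = 4) by (unfold taub_kappa; field; lra).
  assert (Heta : taub_eta g <= 1) by (unfold taub_eta; apply Rle_div_l; lra).
  unfold near_taub in Hnear.
  assert (Hid : 2 * Sm p * Sm (vf g p) + 2 * Nm p * Nm (vf g p)
     = 4 * Nm p ^ 2 * (Om p + (1 + Sp p) ^ 2 - (1 + Sp p))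
       - 2 * (2 - qstar g) * Om p * (Sm p ^ 2 + Nm p ^ 2)).
  { cbn. unfold qf. replace (Om p) with (1 - Sp p ^ 2 - Sm p ^ 2 - Nm p ^ 2) by lra. ring. }
  rewrite Hid. cbn [vf Om].
  assert (-1 <= Sp p) by nra.
  assert ((1 + Sp p) ^ 2 - (1 + Sp p) <= 0) by nra.
  assert (0 <= Om p * (Sm p ^ 2 + Nm p ^ 2)) by nra.
  assert (0 <= taub_kappa g) by (unfold taub_kappa; apply Rlt_le, Rdiv_lt_0_compat; lra).
  assert (4 * Nm p ^ 2 * (Om p + (1 + Sp p) ^ 2 - (1 + Sp p)) <= 4 * (Om p * (Sm p ^ 2 + Nm p ^ 2)))
    by nra.
  assert (taub_kappa g * (2 - qstar g) * (Om p * (Sm p ^ 2 + Nm p ^ 2))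
          <= taub_kappa g * (2 * (qf g p - qstar g)) * (Om p * (Sm p ^ 2 + Nm p ^ 2))).
  { apply Rmult_le_compat_r; [assumption|]. apply Rmult_le_compat_l; lra. }
  nra.
Qed.

End NearTaub.

Section Orbit.

Variables (g : R) (phi : R -> pt).
Hypothesis Hsol : is_solution g phi.

Let sp t := Sp (phi t).
Let sm t := Sm (phi t).
Let np t := Np (phi t).
Let nm t := Nm (phi t).
Let om t := Om (phi t).

Ltac derive_along_orbit t :=
  let Dsp := fresh in let Dsm := fresh in let Dnp := fresh in
  let Dnm := fresh in let Dom := fresh in
  destruct (Hsol t) as (Dsp & Dsm & Dnp & Dnm & Dom);
  auto_derive;
  [ repeat split; eexists; eassumption
  | rewrite ?(is_derive_unique (fun x : R => sp x) t _ Dsp),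
      ?(is_derive_unique (fun x : R => sm x) t _ Dsm),
      ?(is_derive_unique (fun x : R => np x) t _ Dnp),
      ?(is_derive_unique (fun x : R => nm x) t _ Dnm),
      ?(is_derive_unique (fun x : R => om x) t _ Dom) ].

Ltac continuous_along_orbit t :=
  destruct (Hsol t) as (? & ? & ? & ? & ?);
  apply (ex_derive_continuous (K := R_AbsRing) (V := R_NormedModule));
  auto_derive; repeat split; eexists; eassumption.

Ltac unfold_orbit := unfold sp, sm, np, nm, om; cbn [vf Sp Sm Np Nm Om]; unfold qf.

Hypothesis Hphi0 : in_B1plus (phi 0).

Lemma orbit_constraint t : om t + sp t ^ 2 + sm t ^ 2 + nm t ^ 2 = 1.
Proof.
  destruct Hphi0 as [H0 _].
  enough (om t + sp t ^ 2 + sm t ^ 2 + nm t ^ 2 - 1 = 0) by lra.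
  rewrite (linear_ode_exp (fun s => om s + sp s ^ 2 + sm s ^ 2 + nm s ^ 2 - 1)
             (fun s => 2 * (2 * (sp s ^ 2 + sm s ^ 2) + qstar g * om s))).
  - change (om 0 + sp 0 ^ 2 + sm 0 ^ 2 + nm 0 ^ 2 = 1) in H0.
    rewrite H0. ring.
  - intro s. continuous_along_orbit s.
  - intro s. derive_along_orbit s. unfold_orbit. ring.
Qed.

Lemma orbit_om_nonneg t : 0 <= om t.
Proof.
  destruct Hphi0 as (_ & H0 & _).
  rewrite (linear_ode_exp om (fun s => 2 * (2 * (sp s ^ 2 + sm s ^ 2) + qstar g * om s - qstar g))).
  - apply Rmult_le_pos; [exact H0 | apply Rlt_le, exp_pos].
  - intro s. continuous_along_orbit s.
  - intro s. destruct (Hsol s) as (_ & _ & _ & _ & Dom). exact Dom.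
Qed.

Lemma orbit_np_sq_lt_nm_sq t : np t ^ 2 < nm t ^ 2.
Proof.
  destruct Hphi0 as (_ & _ & H0).
  enough (0 < nm t ^ 2 - np t ^ 2) by lra.
  rewrite (linear_ode_exp (fun s => nm s ^ 2 - np s ^ 2)
             (fun s => 2 * (2 * (sp s ^ 2 + sm s ^ 2) + qstar g * om s + 2 * sp s))).
  - apply Rmult_lt_0_compat; [|apply exp_pos].
    pose proof (Rabs_pos (np 0)). rewrite <- (pow2_abs (np 0)).
    change (nm 0 > Rabs (np 0)) in H0. nra.
  - intro s. continuous_along_orbit s.
  - intro s. derive_along_orbit s. unfold_orbit. ring.
Qed.

Lemma orbit_in_unit_cube t : in_unit_cube (phi t).
Proof.
  pose proof (orbit_constraint t). pose proof (orbit_om_nonneg t).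
  pose proof (orbit_np_sq_lt_nm_sq t).
  unfold sp, sm, np, nm, om in *. repeat split; nra.
Qed.

Hypothesis Hg : g < 2.

Lemma om_nondecreasing_near_taub s T :
  s <= T -> (forall x, s <= x <= T -> near_taub g (phi x)) -> om s <= om T.
Proof.
  intros HsT Hnear.
  apply (nondecreasing_of_is_derive_nonneg om (fun x => Om (vf g (phi x))) s T HsT).
  intros x Hx. split; [destruct (Hsol x) as (_ & _ & _ & _ & Dom); exact Dom|].
  pose proof (orbit_om_nonneg x). pose proof (two_sub_qstar_pos g Hg).
  pose proof (q_gap_near_taub g (phi x) Hg (orbit_constraint x) (orbit_om_nonneg x) (Hnear x Hx)).
  cbn [vf Om]. unfold om in *. nra.
Qed.

Lemma sm_nm_lower_bound_near_taub T :
  (forall t, t <= T -> near_taub g (phi t)) ->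
  forall t, t <= T -> (sm T ^ 2 + nm T ^ 2) * exp (- taub_kappa g * om T) <= sm t ^ 2 + nm t ^ 2.
Proof.
  intros Hnear t Ht.
  set (W := fun s => (sm s ^ 2 + nm s ^ 2) * exp (- taub_kappa g * om s)).
  assert (HW : W T <= W t).
  { enough (- W t <= - W T) by lra.
    apply (nondecreasing_of_is_derive_nonneg (fun s => - W s)
      (fun s => exp (- taub_kappa g * om s) *
         (taub_kappa g * Om (vf g (phi s)) * (sm s ^ 2 + nm s ^ 2)
          - 2 * sm s * Sm (vf g (phi s)) - 2 * nm s * Nm (vf g (phi s)))) t T Ht).
    intros x Hx. split.
    - unfold W. derive_along_orbit x. ring.
    - apply Rmult_le_pos; [apply Rlt_le, exp_pos|].
      pose proof (sm_nm_growth_near_taub g (phi x) Hg (orbit_constraint x)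
                    (orbit_om_nonneg x) (Hnear x ltac:(lra))).
      unfold sm, nm. lra. }
  assert (Hexp : exp (- taub_kappa g * om t) <= 1).
  { rewrite <- exp_0. pose proof (orbit_om_nonneg t). pose proof (two_sub_qstar_pos g Hg).
    assert (0 < taub_kappa g) by (unfold taub_kappa; apply Rdiv_lt_0_compat; lra).
    destruct (Rle_lt_or_eq_dec 0 (om t)) as [Hpos | <-]; [assumption| |].
    - left. apply exp_increasing. nra.
    - right. f_equal. ring. }
  unfold W in HW. nra.
Qed.

Variable tk : nat -> R.
Hypotheses (Htk : is_lim_seq tk m_infty) (Hsm : is_lim_seq (fun n => sm (tk n)) 0)
  (Hnm : is_lim_seq (fun n => nm (tk n)) 0).

Lemma leaves_taub_neighbourhood T : exists t0, t0 <= T /\ ~ near_taub g (phi t0).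
Proof.
  apply not_all_not_ex. intro Hnone.
  assert (Hnear : forall t, t <= T -> near_taub g (phi t)).
  { intros t Ht. apply NNPP. intro Hfar. exact (Hnone t (conj Ht Hfar)). }
  set (c := (sm T ^ 2 + nm T ^ 2) * exp (- taub_kappa g * om T)).
  assert (Hc : 0 < c).
  { apply Rmult_lt_0_compat; [|apply exp_pos].
    pose proof (orbit_np_sq_lt_nm_sq T). nra. }
  assert (Hlim : is_lim_seq (fun n => sm (tk n) ^ 2 + nm (tk n) ^ 2) 0).
  { apply is_lim_seq_ext with (fun n => sm (tk n) * sm (tk n) + nm (tk n) * nm (tk n)).
    { intro n. ring. }
    replace (Finite 0) with (Finite (0 * 0 + 0 * 0)) by (f_equal; ring).
    apply is_lim_seq_plus'; apply is_lim_seq_mult'; assumption. }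
  assert (Hfar : eventually (fun n => tk n < T)).
  { apply (Htk (fun x => x < T)). exists T. easy. }
  assert (Hsmall : eventually (fun n => sm (tk n) ^ 2 + nm (tk n) ^ 2 < c)).
  { apply (Hlim (fun x => x < c)), open_lt, Hc. }
  destruct (filter_ex _ (filter_and _ _ Hfar Hsmall)) as [n [HnT Hnc]].
  assert (c <= sm (tk n) ^ 2 + nm (tk n) ^ 2)
    by exact (sm_nm_lower_bound_near_taub T Hnear (tk n) (Rlt_le _ _ HnT)).
  lra.
Qed.

Lemma earlier_point_off_taub T :
  exists s, s <= T /\ taub_eta g <= 1 + sp s /\ om s <= om T.
Proof.
  destruct (Rle_or_lt (taub_eta g) (1 + sp T)) as [HT | HT].
  { exists T. split; [lra|]. split; [exact HT | lra]. }
  destruct (leaves_taub_neighbourhood T) as (t0 & Ht0T & Ht0).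
  apply Rnot_le_lt in Ht0.
  destruct (last_crossing (fun x => 1 + sp x) (taub_eta g) t0 T)
    as (s & Hs & Hcross & Hbelow).
  - intro x. continuous_along_orbit x.
  - exact Ht0T.
  - exact (Rlt_le _ _ Ht0).
  - exact (Rlt_le _ _ HT).
  - exists s. split; [lra | split; [lra|]].
    apply om_nondecreasing_near_taub; [lra|].
    intros x Hx. apply Hbelow, Hx.
Qed.

End Orbit.

Theorem mainTheorem1 (g : R) (phi : R -> pt) :
  2 / 3 < g < 2 ->
  is_solution g phi ->
  in_B1plus (phi 0) ->
  in_alpha_limit phi T1 ->
  exists y : pt, in_alpha_limit phi y /\ y <> T1 /\ Om y = 0.
Proof.
  intros [_ Hg] Hsol Hphi0 (tk & Htk & _ & Hsm & _ & Hnm & Hom).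
  destruct (functional_choice _
    (fun n => earlier_point_off_taub g phi Hsol Hphi0 Hg tk Htk Hsm Hnm (tk n)))
    as [s Hs].
  assert (Hs_lim : is_lim_seq s m_infty).
  { apply (is_lim_seq_le_m_loc tk s); [|exact Htk].
    apply filter_forall. intro n. apply Hs. }
  assert (Hom_s : is_lim_seq (fun n => Om (phi (s n))) 0).
  { apply (is_lim_seq_le_le (fun _ => 0) _ (fun n => Om (phi (tk n))));
      [|apply is_lim_seq_const | exact Hom].
    intro n. split; [apply (orbit_om_nonneg g phi Hsol Hphi0) | apply Hs]. }
  destruct (pt_bolzano_weierstrass (fun n => phi (s n))
              (fun n => orbit_in_unit_cube g phi Hsol Hphi0 (s n)))
    as (psi & y & Hpsi & Hy).
  exists y. split; [|split].
  - exists (fun n => s (psi n)).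
    split; [exact (is_lim_seq_subseq _ _ _ Hpsi Hs_lim) | exact Hy].
  - intros ->. destruct Hy as [HSp _].
    assert (Hoff : forall n, taub_eta g - 1 <= Sp (phi (s n))).
    { intro n. destruct (Hs n) as (_ & Hn & _). cbv beta in Hn. lra. }
    pose proof (is_lim_seq_le _ _ _ _ (fun n => Hoff (psi n)) (is_lim_seq_const _) HSp) as Hle.
    simpl in Hle. pose proof (taub_eta_pos g Hg). lra.
  - destruct Hy as (_ & _ & _ & _ & HOm).
    apply is_lim_seq_unique in HOm.
    rewrite (is_lim_seq_unique _ _ (is_lim_seq_subseq _ _ _ Hpsi Hom_s)) in HOm.
    injection HOm. easy.
Qed.
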